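(* Let $X_1\xleftarrow{\psi_1}X_2\xleftarrow{\psi_2}\cdots$ be a projective system of finite nonempty quandles (each with the discrete topology) and quandle homomorphisms, and let $A_1\xrightarrow{\phi_1}A_2\xrightarrow{\phi_2}\cdots$ be a direct system of discrete abelian groups $A_n$ with automorphisms $T_n$ and group homomorphisms $\phi_n$ satisfying $\phi_nT_n=T_{n+1}\phi_n$. Let $\varprojlim X_n$ carry the componentwise quandle operation and the subspace topology of $\prod_n X_n$, and let $\varinjlim A_n$ carry the discrete topology and the Alexander structure induced by the $T_n$. Then for every $k\ge1$ the map $\Psi:\varinjlim_n H^k_T(X_n,A_n)\to H^k_{TC}(\varprojlim X_n,\varinjlim A_n)$ is a group isomorphism.
   Context: For a quandle $X$ and Alexander quandle $(A,T)$ ($a*b=Ta+(1-T)b$), $H^k_T(X,A)$ is the discrete twisted cohomology: cochains are all maps $f:X^k\to A$ vanishing when $x_i=x_{i+1}$ for some $i$, with $(\delta^k f)(x_1,\dots,x_{k+1})=\sum_{i=1}^{k+1}(-1)^i[Tf(x_1,\dots,\widehat{x_i},\dots,x_{k+1})-f(x_1*x_i,\dots,x_{i-1}*x_i,x_{i+1},\dots,x_{k+1})]$, $H^1_T=\ker\delta^1$, $H^k_T=\ker\delta^k/\operatorname{im}\delta^{k-1}$ for $k\ge2$. $H^k_{TC}$ is defined in the same way for a topological quandle and topological Alexander quandle, using only continuous cochains. The direct system of cohomology groups has maps $\tau_n:H^k_T(X_n,A_n)\to H^k_T(X_{n+1},A_{n+1})$, $[f]\mapsto[\phi_n\circ f\circ\psi_n^{\times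 k}]$. With $\pi_n:\varprojlim X_j\to X_n$ the canonical projections and $\iota_n:A_n\to\varinjlim A_j$ the canonical maps, $\sigma_n:H^k_T(X_n,A_n)\to H^k_{TC}(\varprojlim X_j,\varinjlim A_j)$ is $[f]\mapsto[\iota_n\circ f\circ\pi_n^{\times k}]$; these are compatible with the $\tau_n$ and $\Psi$ is the induced map on the direct limit. *)

From HB Require Import structures.
From mathcomp Require Import all_boot all_order all_algebra.
From Stdlib Require Import ClassicalEpsilon.
Unset Printing Implicit Defensive.
Import GRing.Theory.

Definition is_quandle (X : Type) (op : X -> X -> X) : Prop :=
  [/\ forall x, op x x = x,
      forall y, bijective (fun x => op x y)
    & forall x y z, op (op x y) z = op (op x z) (op y z)].

Record AlexQ := {
  acar :> Type;
  a0 : acar;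
  aadd : acar -> acar -> acar;
  aopp : acar -> acar;
  aT : acar -> acar }.
Arguments a0 : clear implicits.
Arguments aadd : clear implicits.
Arguments aopp : clear implicits.
Arguments aT : clear implicits.

Definition zmodAlex (V : zmodType) (T : V -> V) : AlexQ :=
  {| acar := V; a0 := 0%R; aadd := fun a b => (a + b)%R;
     aopp := fun a => (- a)%R; aT := T |}.

Section Cochains.
Variables (R : AlexQ) (X : Type) (op : X -> X -> X).

Definition is_cochain k (f : ('I_k -> X) -> R) : Prop :=
  forall x : 'I_k -> X,
    (exists i j : 'I_k, nat_of_ord j = (nat_of_ord i).+1 /\ x i = x j) ->
    f x = a0 R.

(* (delta f)(x_1..x_{k+1}) = sum_{i=1}^{k+1} (-1)^i [T f(x with x_i removed)
      - f(x_1*x_i, ..., x_{i-1}*x_i, x_{i+1}, ..., x_{k+1})];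
   here i : 'I_k.+1 is 0-based, so the sign is (-1)^(i+1). *)
Definition cobdry k (f : ('I_k -> X) -> R) : ('I_k.+1 -> X) -> R :=
  fun x =>
    foldr (aadd R) (a0 R)
      [seq (if odd i.+1 then aopp R else (fun a => a))
             (aadd R (aT R (f (fun j : 'I_k => x (lift i j))))
                     (aopp R (f (fun j : 'I_k =>
                                   if (nat_of_ord j < nat_of_ord i)%N
                                   then op (x (lift i j)) (x i)
                                   else x (lift i j)))))
      | i : 'I_k.+1 <- enum 'I_k.+1].

Definition is_cocycle k (f : ('I_k -> X) -> R) : Prop :=
  is_cochain k f /\ forall x, cobdry k f x = a0 R.

(* Equality of classes in H^{m+1}: for m+1 = 1 (H^1 = ker delta^1) plain
   equality; for m+1 >= 2, f = g + delta h for some m-cochain h satisfying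
   the admissibility condition P (True for discrete cohomology,
   continuity for H_TC). *)
Definition cohom_eq m (P : (('I_m -> X) -> R) -> Prop)
    (f g : ('I_m.+1 -> X) -> R) : Prop :=
  (forall x, f x = g x) \/
  ((0 < m)%N /\ exists h : ('I_m -> X) -> R,
      [/\ P h, is_cochain m h & forall x, f x = aadd R (g x) (cobdry m h x)]).
End Cochains.

Section InvLim.
Variables (X : nat -> Type) (psi : forall n, X n.+1 -> X n).

Definition invlim := {x : forall n, X n | forall n, psi n (x n.+1) = x n}.

Definition proj_n n (x : invlim) : X n := proj1_sig x n.

Variables (op : forall n, X n -> X n -> X n)
          (hpsi : forall n a b, psi n (op n.+1 a b) = op n (psi n a) (psi n b)).

Lemma invlim_op_proof (x y : invlim) :
  forall n, psi n (op n.+1 (proj1_sig x n.+1) (proj1_sig y n.+1))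
            = op n (proj1_sig x n) (proj1_sig y n).
Proof. by move=> n; rewrite hpsi (proj2_sig x) (proj2_sig y). Qed.

Definition invlim_op (x y : invlim) : invlim :=
  exist _ (fun n => op n (proj1_sig x n) (proj1_sig y n)) (invlim_op_proof x y).
End InvLim.

(* Continuity of g : (lim X)^k -> D, where lim X carries the subspace topology
   of the product of the discrete X n, (lim X)^k the product topology, and D
   is discrete. *)
Definition is_cont (X : nat -> Type) (psi : forall n, X n.+1 -> X n)
    (D : Type) k (g : ('I_k -> invlim X psi) -> D) : Prop :=
  forall x, exists N, forall y,
    (forall (j : 'I_k) n, (n <= N)%N -> proj_n X psi n (y j) = proj_n X psi n (x j)) ->
    g y = g x.

Fixpoint psis (X : nat -> Type) (psi : forall n, X n.+1 -> X n) n d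
  : X (d + n) -> X n :=
  match d with
  | 0 => fun x => x
  | d'.+1 => fun x => psis X psi n d' (psi (d' + n) x)
  end.

(* Direct limit of A_0 -> A_1 -> ... (phi n : A n -> A n.+1), as the set of
   equivalence classes of the disjoint union under eventual equality.   *)
Section DirLim.
Variables (A : nat -> zmodType) (phi : forall n, A n -> A n.+1)
          (T : forall n, A n -> A n).

Fixpoint phis n d : A n -> A (d + n) :=
  match d with
  | 0 => fun a => a
  | d'.+1 => fun a => phi (d' + n) (phis n d' a)
  end.

Definition dl_eqv (x y : {n & A n}) : Prop :=
  exists d1 d2,
    existT A (d1 + projT1 x) (phis (projT1 x) d1 (projT2 x))
    = existT A (d2 + projT1 y) (phis (projT1 y) d2 (projT2 y)).

Definition dirlim := {C : {n & A n} -> Prop | exists x, C = dl_eqv x}.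

Definition dl_cls (x : {n & A n}) : dirlim :=
  exist _ (dl_eqv x) (ex_intro _ x erefl).

Definition dl_iota n (a : A n) : dirlim := dl_cls (existT A n a).

Definition dl_inh : inhabited {n & A n} := inhabits (existT A 0 0%R).

Definition dl_zero : dirlim := dl_iota 0 0%R.

(* operations via representatives at a common level *)
Definition dl_add (u v : dirlim) : dirlim :=
  dl_cls (epsilon dl_inh (fun z => exists p (a b : A p),
     [/\ proj1_sig u (existT A p a), proj1_sig v (existT A p b)
       & z = existT A p (a + b)%R])).

Definition dl_opp (u : dirlim) : dirlim :=
  dl_cls (epsilon dl_inh (fun z => exists p (a : A p),
     proj1_sig u (existT A p a) /\ z = existT A p (- a)%R)).

Definition dl_T (u : dirlim) : dirlim :=
  dl_cls (epsilon dl_inh (fun z => exists p (a : A p),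
     proj1_sig u (existT A p a) /\ z = existT A p (T p a))).

Definition dl_alex : AlexQ :=
  {| acar := dirlim; a0 := dl_zero; aadd := dl_add; aopp := dl_opp; aT := dl_T |}.
End DirLim.

Definition sigma_map (X : nat -> Type) (psi : forall n, X n.+1 -> X n)
    (A : nat -> zmodType) (phi : forall n, A n -> A n.+1) k n
    (f : ('I_k -> X n) -> A n) : ('I_k -> invlim X psi) -> dirlim A phi :=
  fun x => dl_iota A phi n (f (fun j => proj_n X psi n (x j))).

Definition tau_iter (X : nat -> Type) (psi : forall n, X n.+1 -> X n)
    (A : nat -> zmodType) (phi : forall n, A n -> A n.+1) k n d
    (f : ('I_k -> X n) -> A n) : ('I_k -> X (d + n)) -> A (d + n) :=
  fun x => phis A phi n d (f (fun j => psis X psi n d (x j))).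

Definition castco (X : nat -> Type) (A : nat -> zmodType) k p q (e : p = q)
    (f : ('I_k -> X p) -> A p) : ('I_k -> X q) -> A q :=
  eq_rect p (fun r => ('I_k -> X r) -> A r) f q e.

(* Compactness of lim X (König's lemma over the finite X_n) makes every continuous
   cochain on (lim X)^k factor through some finite level X_N, and since it then takes
   finitely many values these are all represented in a single A_p.  A point of X_N
   comes from lim X iff it lies in the image of X_{N+d} for every d; these images
   stabilise by finiteness, which yields sections X_{N+d} -> lim X of the projection
   onto that image.  Pulling a continuous cocycle, or a coboundary relation, on the
   limit back along such a section gives the same data at a finite level up to
   elements of A_p that die in lim A, and these are killed by going up a few more levels.
   This proves surjectivity and injectivity of Psi; well-definedness, compatibility
   and additivity are formal. *)

From Pilot Require Import Defs.
From HB Require Import structures.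
From mathcomp Require Import all_boot all_order all_algebra.
From Stdlib Require Import ClassicalEpsilon ProofIrrelevance FunctionalExtensionality.
From Stdlib Require Import PropExtensionality Eqdep_dec Classical.
Unset Printing Implicit Defensive.
Import GRing.Theory.

Lemma fin_uniform_bound (W : finType) (P : nat -> W -> Prop) :
  (forall M M' w, M <= M' -> P M w -> P M' w) -> (forall w, exists M, P M w) ->
  exists M, forall w, P M w.
Proof.
move=> up ex; suff [M HM] : exists M, forall w, w \in enum W -> P M w.
  by exists M => w; apply: HM; rewrite mem_enum.
elim: (enum W) => [|w s [M HM]]; first by exists 0.
have [Mw Hw] := ex w; exists (maxn M Mw) => v; rewrite inE => /predU1P [->|vs].
  exact: up (leq_maxr _ _) Hw.
exact: up (leq_maxl _ _) (HM _ vs).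
Qed.

Lemma fin_witness_forall (W : finType) (Q : nat -> W -> Prop) :
  (forall M M' w, M <= M' -> Q M' w -> Q M w) -> (forall M, exists w, Q M w) ->
  exists w, forall M, Q M w.
Proof.
move=> down ex; apply: NNPP => none.
have [|w|M HM] := @fin_uniform_bound W (fun M w => ~ Q M w).
- by move=> M M' w le nQ /(down _ _ _ le).
- apply: NNPP => Hw; apply: none; exists w => M; apply: NNPP => nQ.
  by apply: Hw; exists M.
by have [w /HM] := ex M.
Qed.

Definition alex_morph {R1 R2 : AlexQ} (h : R1 -> R2) : Prop :=
  [/\ forall a b, h (aadd R1 a b) = aadd R2 (h a) (h b), h (a0 R1) = a0 R2,
      forall a, h (aopp R1 a) = aopp R2 (h a) & forall a, h (aT R1 a) = aT R2 (h a)].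

Lemma cobdry_alex_morph {R1 R2 : AlexQ} (h : R1 -> R2) (Y : Type) (op : Y -> Y -> Y) k f x :
  alex_morph h -> h (cobdry R1 Y op k f x) = cobdry R2 Y op k (fun y => h (f y)) x.
Proof.
case=> hD h0 hN hT; rewrite /cobdry; elim: (enum _) => //= i s IH.
by rewrite hD IH; case: ifP => _; rewrite ?hN hD hT hN.
Qed.

Lemma eq_cobdry (R : AlexQ) (Y Z : Type) (opY : Y -> Y -> Y) (opZ : Z -> Z -> Z) k
    (F : ('I_k -> Y) -> R) (G : ('I_k -> Z) -> R) y z :
  (forall i : 'I_k.+1, F (fun j => y (lift i j)) = G (fun j => z (lift i j)) /\
     F (fun j => if (j < i) then opY (y (lift i j)) (y i) else y (lift i j))
     = G (fun j => if (j < i) then opZ (z (lift i j)) (z i) else z (lift i j))) ->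
  cobdry R Y opY k F y = cobdry R Z opZ k G z.
Proof.
by move=> E; rewrite /cobdry; congr foldr; apply: eq_map => i; case: (E i) => -> ->.
Qed.

Lemma cobdry_comp (R : AlexQ) (Y Z : Type) (opY : Y -> Y -> Y) (opZ : Z -> Z -> Z) k
    (pi : Y -> Z) (hpi : forall a b, pi (opY a b) = opZ (pi a) (pi b))
    (f : ('I_k -> Z) -> R) y :
  cobdry R Y opY k (fun w => f (fun j => pi (w j))) y
  = cobdry R Z opZ k f (fun j => pi (y j)).
Proof.
apply: eq_cobdry => i; split=> //; congr f; apply: functional_extensionality => j.
by case: ifP.
Qed.

Lemma eq_cohom_eq (R : AlexQ) (Y : Type) (op : Y -> Y -> Y) m P
    (f f' g g' : ('I_m.+1 -> Y) -> R) :
  (forall x, f x = f' x) -> (forall x, g x = g' x) ->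
  cohom_eq R Y op m P f g -> cohom_eq R Y op m P f' g'.
Proof.
move=> Ef Eg [E|[m_gt0 [h [Ph hco E]]]]; [left=> x|right; split=> //; exists h].
  by rewrite -Ef -Eg.
by split=> // x; rewrite -Ef -Eg.
Qed.

Section DirectLimit.
Variables (A : nat -> zmodType) (phi : forall n, {additive A n -> A n.+1}).
Local Notation ph := (fun n => (phi n : A n -> A n.+1)).
Local Notation phis := (phis A ph).
Local Notation iota := (dl_iota A ph).
Local Notation dl_eqv := (dl_eqv A ph).
Local Notation SA := {n : nat & A n}.

Lemma phis_comm1 (F : forall k, A k -> A k)
    (FC : forall k a, phi k (F k a) = F k.+1 (phi k a)) n d a :
  phis n d (F n a) = F (d + n) (phis n d a).
Proof. by elim: d => //= d ->; rewrite FC. Qed.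

Lemma phis_comm2 (F : forall k, A k -> A k -> A k)
    (FC : forall k a b, phi k (F k a b) = F k.+1 (phi k a) (phi k b)) n d a b :
  phis n d (F n a b) = F (d + n) (phis n d a) (phis n d b).
Proof. by elim: d => //= d ->; rewrite FC. Qed.

Lemma phisD n d : {morph phis n d : a b / (a + b)%R}.
Proof. exact: (@phis_comm2 (fun k a b => (a + b)%R) (fun k => raddfD (phi k))). Qed.

Lemma phisN n d : {morph phis n d : a / (- a)%R}.
Proof. exact: (@phis_comm1 (fun k a => (- a)%R) (fun k => raddfN (phi k))). Qed.

Lemma phis0 n d : phis n d 0%R = 0%R.
Proof. by elim: d => //= d ->; rewrite raddf0. Qed.

Definition shift (x : SA) : SA := existT _ (projT1 x).+1 (phi _ (projT2 x)).

Lemma phisE n d a : existT _ (d + n) (phis n d a) = iter d shift (existT _ n a).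
Proof. by elim: d => //= d <-. Qed.

Lemma iter_shift_level d x : projT1 (iter d shift x) = (d + projT1 x).
Proof. by elim: d => //= d ->. Qed.

Lemma eq_existT_A {n} {a b : A n} : existT A n a = existT A n b -> a = b.
Proof. exact: (inj_pair2_eq_dec _ PeanoNat.Nat.eq_dec). Qed.

Lemma dl_eqv_shift x y : dl_eqv x y <-> exists d1 d2, iter d1 shift x = iter d2 shift y.
Proof.
case: x y => n a [p b]; rewrite /Defs.dl_eqv /=.
by split=> -[d1 [d2 E]]; exists d1, d2; move: E; rewrite !phisE.
Qed.

Lemma dl_eqv_refl x : dl_eqv x x.
Proof. by apply/dl_eqv_shift; exists 0, 0. Qed.

Lemma dl_eqv_sym x y : dl_eqv x y -> dl_eqv y x.
Proof. by move/dl_eqv_shift=> [d1 [d2 E]]; apply/dl_eqv_shift; exists d2, d1. Qed.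

Lemma dl_eqv_trans x y z : dl_eqv x y -> dl_eqv y z -> dl_eqv x z.
Proof.
move=> /dl_eqv_shift [d1 [d2 E1]] /dl_eqv_shift [d3 [d4 E2]]; apply/dl_eqv_shift.
by exists (d3 + d1), (d2 + d4); rewrite !iterD E1 -iterD addnC iterD E2.
Qed.

Lemma dl_cls_eq x y : dl_cls A ph x = dl_cls A ph y <-> dl_eqv x y.
Proof.
split=> [E|Exy].
  by have := dl_eqv_refl y; rewrite -[dl_eqv y]/(sval (dl_cls A ph y)) -E.
have E : dl_eqv x = dl_eqv y.
  apply: functional_extensionality => z; apply: propositional_extensionality.
  by split; apply: dl_eqv_trans; [apply: dl_eqv_sym|].
rewrite /dl_cls; move: (ex_intro _ x _) (ex_intro _ y _); rewrite E => p q.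
by rewrite (proof_irrelevance _ p q).
Qed.

Lemma dl_iota_surj (u : dirlim A ph) : exists n a, u = iota n a.
Proof.
case: u => C [[n a] EC]; exists n, a; rewrite /dl_iota /dl_cls.
move: (ex_intro _ _ _); rewrite EC => p.
by rewrite (proof_irrelevance _ p (ex_intro _ (existT _ n a) erefl)).
Qed.

Lemma dl_iota_eq n a b : iota n a = iota n b <-> exists d, phis n d a = phis n d b.
Proof.
rewrite dl_cls_eq; split=> [[d1 [d2 E]]|[d E]]; last by exists d, d; rewrite E.
have /eqP := f_equal (@projT1 _ _) E; rewrite /= eqn_add2r => /eqP e; subst d1.
by exists d2; apply: eq_existT_A.
Qed.

Lemma dl_iota_phis n d a : iota (d + n) (phis n d a) = iota n a.
Proof. by apply/dl_cls_eq; exists 0, d. Qed.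

Lemma dl_iota0 n : iota n 0%R = dl_zero A ph.
Proof.
apply/dl_cls_eq; exists 0, n; rewrite !phis0 /=.
by move: (n + 0) (addn0 n) => q ->.
Qed.

Lemma dl_iota_raise {n} a {q} : (n <= q) -> exists b : A q, iota n a = iota q b.
Proof.
move=> le; rewrite -(subnK le); exists (phis n (q - n) a).
by rewrite dl_iota_phis.
Qed.

Lemma dl_eqv_sync {n a b p a' b'} :
  dl_eqv (existT _ n a) (existT _ p a') -> dl_eqv (existT _ n b) (existT _ p b') ->
  exists c1 c2,
    existT A (c1 + n) (phis n c1 a) = existT A (c2 + p) (phis p c2 a') /\
    existT A (c1 + n) (phis n c1 b) = existT A (c2 + p) (phis p c2 b').
Proof.
move=> /dl_eqv_shift [d1 [d2 E1]] /dl_eqv_shift [e1 [e2 E2]].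
have /= := f_equal (@projT1 _ _) E1; have /= := f_equal (@projT1 _ _) E2.
rewrite !iter_shift_level /= => L2 L1.
have Ed : (e1 + d2 = d1 + e2).
  by apply/eqP; rewrite -(eqn_add2r p) -!addnA -L1 -L2 addnCA.
exists (e1 + d1), (e1 + d2); rewrite !phisE; split; first by rewrite !iterD E1.
by rewrite Ed (addnC e1) !iterD E2.
Qed.

Lemma existT_A_map1 (F : forall k, A k -> A k) i j u u' :
  existT A i u = existT A j u' -> existT A i (F i u) = existT A j (F j u').
Proof.
by move=> E; have /= e := f_equal (@projT1 _ _) E; subst j; rewrite (eq_existT_A E).
Qed.

Lemma existT_A_map2 (F : forall k, A k -> A k -> A k) i j u u' v v' :
  existT A i u = existT A j u' -> existT A i v = existT A j v' ->
  existT A i (F i u v) = existT A j (F j u' v').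
Proof.
move=> Eu Ev; have /= e := f_equal (@projT1 _ _) Eu; subst j.
by rewrite (eq_existT_A Eu) (eq_existT_A Ev).
Qed.

Lemma dl_lift1E (F : forall k, A k -> A k)
    (FC : forall k a, phi k (F k a) = F k.+1 (phi k a)) n a :
  dl_cls A ph (epsilon (dl_inh A) (fun z => exists p (b : A p),
     sval (iota n a) (existT A p b) /\ z = existT A p (F p b))) = iota n (F n a).
Proof.
set P := (X in epsilon _ X).
have Pne : exists z, P z.
  by exists (existT _ n (F n a)), n, a; split=> //; apply: dl_eqv_refl.
have := epsilon_spec (dl_inh A) P Pne; move: (epsilon _ _) => w [p [b [[d1 [d2 E]] ->]]].
apply/dl_cls_eq/dl_eqv_sym; exists d1, d2.
by rewrite /= !(phis_comm1 _ FC); apply: existT_A_map1.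
Qed.

Lemma dl_lift2E (F : forall k, A k -> A k -> A k)
    (FC : forall k a b, phi k (F k a b) = F k.+1 (phi k a) (phi k b)) n a b :
  dl_cls A ph (epsilon (dl_inh A) (fun z => exists p (a' b' : A p),
     [/\ sval (iota n a) (existT A p a'), sval (iota n b) (existT A p b')
       & z = existT A p (F p a' b')])) = iota n (F n a b).
Proof.
set P := (X in epsilon _ X).
have Pne : exists z, P z.
  by exists (existT _ n (F n a b)), n, a, b; split=> //; apply: dl_eqv_refl.
have := epsilon_spec (dl_inh A) P Pne; move: (epsilon _ _) => w [p [a' [b' [Ea Eb ->]]]].
have [c1 [c2 [E1 E2]]] := dl_eqv_sync Ea Eb.
apply/dl_cls_eq/dl_eqv_sym; exists c1, c2.
by rewrite /= !(phis_comm2 _ FC); apply: existT_A_map2.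
Qed.

Lemma dl_addE n a b : dl_add A ph (iota n a) (iota n b) = iota n (a + b)%R.
Proof. exact: (@dl_lift2E (fun k a b => (a + b)%R) (fun k => raddfD (phi k))). Qed.

Lemma dl_oppE n a : dl_opp A ph (iota n a) = iota n (- a)%R.
Proof. exact: (@dl_lift1E (fun k a => (- a)%R) (fun k => raddfN (phi k))). Qed.

Lemma phis_leq n d c a b : (d <= c) ->
  phis n d a = phis n d b -> phis n c a = phis n c b.
Proof.
move=> le E; apply: eq_existT_A; rewrite !phisE -(subnK le) !iterD -!phisE.
by rewrite E.
Qed.

Lemma dl_iota_eq_uniform (W : finType) q (F G : W -> A q) :
  (forall w, iota q (F w) = iota q (G w)) ->
  exists c, forall w, phis q c (F w) = phis q c (G w).
Proof.
move=> E; apply: fin_uniform_bound => [c c' w le|w]; first exact: phis_leq.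
exact/dl_iota_eq.
Qed.

(* Representatives of 0 are chosen to be 0, so that descended cochains stay normalized. *)
Lemma dl_common_level (W : finType) (u : W -> dirlim A ph) q :
  exists R (r : W -> A (R + q)),
    forall w, u w = iota _ (r w) /\ (u w = dl_zero A ph -> r w = 0%R).
Proof.
have [R HR] : exists R, forall w, exists b : A R, u w = iota R b.
  apply: fin_uniform_bound => [M M' w le [b ->]|w]; first exact: dl_iota_raise.
  by have [n [a ->]] := dl_iota_surj (u w); exists n, a.
have rep w : exists b : A (R + q), u w = iota _ b /\ (u w = dl_zero A ph -> b = 0%R).
  case: (classic (u w = dl_zero A ph)) => [->|nz]; first by exists 0%R; rewrite dl_iota0.
  have [a Ea] := HR w; have [b Eb] := dl_iota_raise a (leq_addr q R).
  by exists b; split=> [|/nz //]; rewrite Ea Eb.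
exists R, (fun w => proj1_sig (constructive_indefinite_description _ (rep w))) => w.
exact: proj2_sig (constructive_indefinite_description _ (rep w)).
Qed.

Variables (T : forall n, {additive A n -> A n})
          (phiT : forall n a, phi n (T n a) = T n.+1 (phi n a)).

Lemma phisT n d a : phis n d (T n a) = T (d + n) (phis n d a).
Proof. exact: (@phis_comm1 (fun k a => T k a) phiT). Qed.

Lemma dl_TE n a : dl_T A ph (fun k => T k) (iota n a) = iota n (T n a).
Proof. exact: (@dl_lift1E (fun k a => T k a) phiT). Qed.

Lemma phis_alex_morph n d :
  alex_morph (R1 := zmodAlex (A n) (T n)) (R2 := zmodAlex (A (d + n)) (T (d + n)))
    (phis n d).
Proof. by split=> [a b||a|a] /=; rewrite ?phisD ?phis0 ?phisN ?phisT. Qed.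

Lemma dl_iota_alex_morph n :
  alex_morph (R1 := zmodAlex (A n) (T n)) (R2 := dl_alex A ph (fun k => T k)) (iota n).
Proof. by split=> [a b||a|a] /=; rewrite ?dl_addE ?dl_iota0 ?dl_oppE ?dl_TE. Qed.

End DirectLimit.

Lemma invlim_choice (Y : nat -> Type) (psiY : forall n, Y n.+1 -> Y n)
    (P : forall n, Y n -> Prop) (y0 : Y 0) :
  P 0 y0 -> (forall n y, P n y -> exists y', psiY n y' = y /\ P n.+1 y') ->
  exists l : invlim Y psiY, proj_n Y psiY 0 l = y0 /\ forall n, P n (proj_n Y psiY n l).
Proof.
move=> P0 step.
pose next n (y : {y | P n y}) :=
  constructive_indefinite_description _ (step n _ (proj2_sig y)).
pose t := nat_rect (fun n => {y | P n y}) (exist _ y0 P0)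
  (fun n y => exist _ (proj1_sig (next n y)) (proj2 (proj2_sig (next n y)))).
exists (exist (fun s : forall n, Y n => forall n, psiY n (s n.+1) = s n)
  (fun n => proj1_sig (t n)) (fun n => proj1 (proj2_sig (next n (t n))))).
by split=> // n; apply: proj2_sig.
Qed.

Section InverseLimit.
Variables (X : nat -> finType) (psi : forall n, X n.+1 -> X n).
Local Notation Xt := (fun n => X n : Type).
Local Notation L := (invlim Xt psi).
Local Notation pr := (proj_n Xt psi).
Local Notation ps := (psis Xt psi).

Lemma pr_psis (l : L) n d : ps n d (pr (d + n) l) = pr n l.
Proof. by elim: d => //= d IH; rewrite /proj_n (proj2_sig l). Qed.

Lemma pr_eq_leq {M} {u v : L} : pr M u = pr M v -> forall n, n <= M -> pr n u = pr n v.
Proof.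
elim: M => [|M IH] E n; first by rewrite leqn0 => /eqP ->.
rewrite leq_eqVlt => /predU1P [-> //|]; rewrite ltnS; apply: IH.
by rewrite /proj_n -(proj2_sig u) -(proj2_sig v); congr psi.
Qed.

Definition depends_on {k} {D : Type} N (g : ('I_k -> L) -> D) : Prop :=
  forall y y', (forall j, pr N (y j) = pr N (y' j)) -> g y = g y'.

Lemma depends_on_leq k (D : Type) N M (g : ('I_k -> L) -> D) :
  N <= M -> depends_on N g -> depends_on M g.
Proof. by move=> le dep y y' E; apply: dep => j; apply: pr_eq_leq (E j) _ le. Qed.

(* König's lemma: if g depends on no finite level, tuples witnessing this at every depth
   assemble into a point of the limit at which g is not continuous. *)
Section UniformContinuity.
Variables (k : nat) (D : Type) (g : ('I_k -> L) -> D).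

Let tup n (y : 'I_k -> L) : {ffun 'I_k -> X n} := [ffun j => pr n (y j)].
Let bad M (y : 'I_k -> L) := exists y', (forall j, pr M (y j) = pr M (y' j)) /\ g y <> g y'.
Let bad_over n (w : {ffun 'I_k -> X n}) := forall M, exists y, tup n y = w /\ bad M y.

Let bad_leq M M' y : M <= M' -> bad M' y -> bad M y.
Proof. by move=> le [y' [E ne]]; exists y'; split=> // j; apply: pr_eq_leq (E j) _ le. Qed.

Let bad_over_refine n w : bad_over n w ->
  exists w' : {ffun 'I_k -> X n.+1}, [ffun j => psi n (w' j)] = w /\ bad_over n.+1 w'.
Proof.
move=> Bw; have [|M|w' Hw'] :=
  @fin_witness_forall _ (fun M w' => exists y, [/\ tup n.+1 y = w', tup n y = w & bad M y]).
- by move=> M M' w' le [y [E1 E2 /(bad_leq _ _ _ le) B]]; exists y.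
- by have [y [E B]] := Bw M; exists (tup n.+1 y), y.
exists w'; split=> [|M]; last by have [y [E1 _ B]] := Hw' M; exists y.
have [y [<- <- _]] := Hw' 0; apply/ffunP => j.
by rewrite !ffunE /proj_n (proj2_sig (y j)).
Qed.

Lemma cont_depends_on : is_cont Xt psi D k g -> exists N, depends_on N g.
Proof.
move=> cont; apply: NNPP => nunif.
have [|M|w0 B0] := @fin_witness_forall _ (fun M w => exists y, tup 0 y = w /\ bad M y).
- by move=> M M' w le [y [E /(bad_leq _ _ _ le) B]]; exists y.
- have [y B] : exists y, bad M y.
    apply: NNPP => nb; apply: nunif; exists M => y y' E; apply: NNPP => ne.
    by apply: nb; exists y, y'.
  by exists (tup 0 y), y.
have [t [_ Bt]] := invlim_choice (fun n => {ffun 'I_k -> X n})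
  (fun n w => [ffun j => psi n (w j)]) bad_over w0 B0 bad_over_refine.
have tP n j : psi n (proj1_sig t n.+1 j) = proj1_sig t n j.
  by rewrite -(proj2_sig t n) ffunE.
pose x j : L := exist (fun s : forall n, X n => forall n, psi n (s n.+1) = s n)
  (fun n => proj1_sig t n j) (fun n => tP n j).
have [N HN] := cont x; have [y [ty [y' [E ne]]]] := Bt N N.
have Ey j : pr N (y j) = pr N (x j).
  by have := congr1 (fun w : {ffun _} => w j) ty; rewrite ffunE.
have near z : (forall j, pr N (z j) = pr N (x j)) -> g z = g x.
  by move=> Ez; apply: HN => j; apply: pr_eq_leq (Ez j).
by apply: ne; rewrite (near y Ey) near // => j; rewrite -E Ey.
Qed.
End UniformContinuity.

Definition castX {p q} (e : p = q) (x : X p) : X q := eq_rect p Xt x q e.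

Lemma castX_id {p} (e : p = p) x : castX e x = x.
Proof. by rewrite (eq_irrelevance e erefl). Qed.

Lemma castX_irr {p q} (e e' : p = q) x : castX e x = castX e' x.
Proof. by rewrite (eq_irrelevance e e'). Qed.

Lemma castX_comp {p q r} (e1 : p = q) (e2 : q = r) x :
  castX e2 (castX e1 x) = castX (etrans e1 e2) x.
Proof. by subst. Qed.

Lemma castX_psi {a b} (e : a.+1 = b.+1) (e' : a = b) x :
  psi b (castX e x) = castX e' (psi a x).
Proof. by subst; rewrite !castX_id. Qed.

Lemma psi_psis_cast d n (v : X (d.+1 + n)) (e : d.+1 + n = d + n.+1) :
  psi n (ps n.+1 d (castX e v)) = ps n d.+1 v.
Proof.
elim: d v e => [|d IH] v e; first by rewrite castX_id.
have e' : d.+1 + n = d + n.+1 by rewrite addSnnS.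
by rewrite /= (castX_psi e e') IH.
Qed.

Lemma invlim_of_tail N (t : invlim (fun n => X (n + N)) (fun n => psi (n + N))) :
  exists l : L, pr N l = proj1_sig t 0.
Proof.
pose l n := ps n N (castX (addnC n N) (proj1_sig t n)).
have lP n : psi n (l n.+1) = l n.
  have ea : n.+1 + N = N.+1 + n by rewrite addSn addnC.
  have eb : N.+1 + n = N + n.+1 by rewrite addSnnS.
  have ec : n + N = N + n by rewrite addnC.
  rewrite /l (castX_irr _ (etrans ea eb)) -castX_comp psi_psis_cast /=.
  rewrite (castX_psi (a := n + N) (b := N + n) ea ec) (proj2_sig t).
  by rewrite (castX_irr ec (addnC n N)).

exists (exist (fun s : forall n, X n => forall n, psi n (s n.+1) = s n) l lP).
rewrite /proj_n /= /l castX_id.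
have down n : ps N n (proj1_sig t n) = proj1_sig t 0.
  by elim: n => //= n IH; rewrite (proj2_sig t).
exact: down.
Qed.

Definition has_preimage n d (z : X n) : Prop := exists v : X (d + n), ps n d v = z.

(* By finiteness these are exactly the projections of points of the limit. *)
Definition liftable n (z : X n) : Prop := forall d, has_preimage n d z.

Lemma has_preimage_leq n d d' z : d <= d' -> has_preimage n d' z -> has_preimage n d z.
Proof.
move=> /subnK <-; elim: (d' - d) => //= c IH [v Ev].
by apply: IH; exists (psi _ v).
Qed.

Lemma liftable_image n : exists d, forall x : X (d + n), liftable n (ps n d x).
Proof.
have [|z|d Hd] := fin_uniform_bound _ (fun d z => liftable n z \/ ~ has_preimage n d z).
- move=> d d' z le [|nz]; [by left|right=> /(has_preimage_leq _ _ _ _ le); exact: nz].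
- case: (classic (liftable n z)) => [|nl]; first by exists 0; left.
  have [d nd] : exists d, ~ has_preimage n d z.
    by apply: NNPP => H; apply: nl => d; apply: NNPP => nd; apply: H; exists d.
  by exists d; right.
by exists d => x; case: (Hd (ps n d x)) => // -[]; exists x.
Qed.

Lemma liftable_lift n z : liftable n z -> exists z', psi n z' = z /\ liftable n.+1 z'.
Proof.
move=> Hz; apply: NNPP => none.
have [|z'|d Hd] :=
  fin_uniform_bound _ (fun d z' => psi n z' <> z \/ ~ has_preimage n.+1 d z').
- move=> d d' z' le [|nz]; [by left|right=> /(has_preimage_leq _ _ _ _ le); exact: nz].
- case: (classic (psi n z' = z)) => [Ez|]; last by exists 0; left.
  apply: NNPP => H; apply: none; exists z'; split=> // d; apply: NNPP => nd.
  by apply: H; exists d; right.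
have [v Ev] := Hz d.+1; have e : d.+1 + n = d + n.+1 by rewrite addSnnS.
case: (Hd (ps n.+1 d (castX e v))); first by rewrite psi_psis_cast.
by apply; exists (castX e v).
Qed.

Lemma liftable_thread N z : liftable N z -> exists l : L, pr N l = z.
Proof.
move=> Hz; have [t [t0 _]] := invlim_choice (fun n => X (n + N)) (fun n => psi (n + N))
  (fun n => liftable (n + N)) z Hz (fun n y => liftable_lift (n + N) y).
by have [l El] := invlim_of_tail N t; exists l; rewrite El.
Qed.

Lemma invlim_section Q : exists d (s : X (d + Q) -> L), forall a, pr Q (s a) = ps Q d a.
Proof.
have [d Hd] := liftable_image Q.
have lifts a : exists l : L, pr Q l = ps Q d a by apply: liftable_thread.
exists d, (fun a => proj1_sig (constructive_indefinite_description _ (lifts a))) => a.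
exact: proj2_sig (constructive_indefinite_description _ (lifts a)).
Qed.
End InverseLimit.

Section QuandleCochains.
Variables (X : nat -> finType) (opX : forall n, X n -> X n -> X n)
  (psi : forall n, X n.+1 -> X n)
  (hpsi : forall n a b, psi n (opX n.+1 a b) = opX n (psi n a) (psi n b))
  (A : nat -> zmodType) (T : forall n, {additive A n -> A n})
  (phi : forall n, {additive A n -> A n.+1})
  (phiT : forall n a, phi n (T n a) = T n.+1 (phi n a)).
Local Notation Xt := (fun n => X n : Type).
Local Notation ph := (fun n => (phi n : A n -> A n.+1)).
Local Notation L := (invlim Xt psi).
Local Notation Lop := (invlim_op Xt psi opX hpsi).
Local Notation D := (dl_alex A ph (fun n => T n)).
Local Notation An n := (zmodAlex (A n) (T n)).
Local Notation pr := (proj_n Xt psi).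
Local Notation ps := (psis Xt psi).
Local Notation iota := (dl_iota A ph).
Local Notation sigma k n f := (sigma_map Xt psi A ph k n f).
Local Notation tau k n d f := (tau_iter Xt psi A ph k n d f).

Lemma psis_op n d a b : ps n d (opX (d + n) a b) = opX n (ps n d a) (ps n d b).
Proof. by elim: d a b => //= d IH a b; rewrite hpsi IH. Qed.

Lemma sigma_cobdry k n f y :
  sigma k.+1 n (cobdry (An n) (X n) (opX n) k f) y = cobdry D L Lop k (sigma k n f) y.
Proof.
rewrite /sigma_map (cobdry_alex_morph _ _ _ _ _ _ (dl_iota_alex_morph A phi T phiT n)).
by rewrite -(cobdry_comp _ _ _ Lop (opX n) _ (pr n)).
Qed.

Lemma tau_cobdry k n d f x :
  tau k.+1 n d (cobdry (An n) (X n) (opX n) k f) x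
  = cobdry (An (d + n)) (X (d + n)) (opX (d + n)) k (tau k n d f) x.
Proof.
rewrite /tau_iter (cobdry_alex_morph _ _ _ _ _ _ (phis_alex_morph A phi T phiT n d)).
by rewrite -(cobdry_comp _ _ _ _ (opX n) _ (ps n d) (psis_op n d)).
Qed.

Lemma sigma_tau k n d f y : sigma k (d + n) (tau k n d f) y = sigma k n f y.
Proof.
rewrite /sigma_map /tau_iter dl_iota_phis; congr (iota _ (f _)).
by apply: functional_extensionality => j; rewrite pr_psis.
Qed.

Lemma sigma_cochain k n f : is_cochain (An n) (X n) k f -> is_cochain D L k (sigma k n f).
Proof.
move=> Hf y [i [j [e E]]]; rewrite /sigma_map Hf ?dl_iota0 //.
by exists i, j; rewrite E.
Qed.

Lemma tau_cochain k n d f :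
  is_cochain (An n) (X n) k f -> is_cochain (An (d + n)) (X (d + n)) k (tau k n d f).
Proof.
move=> Hf x [i [j [e E]]]; rewrite /tau_iter Hf ?phis0 //.
by exists i, j; rewrite E.
Qed.

Lemma sigma_cont k n f : is_cont Xt psi D k (sigma k n f).
Proof.
move=> x; exists n => y E; rewrite /sigma_map; congr (iota _ (f _)).
by apply: functional_extensionality => j; apply: E.
Qed.

Lemma sigma_cocycle k n f : is_cocycle (An n) (X n) (opX n) k.+1 f ->
  is_cont Xt psi D k.+1 (sigma k.+1 n f) /\ is_cocycle D L Lop k.+1 (sigma k.+1 n f).
Proof.
move=> [Hf dHf]; split; first exact: sigma_cont.
split=> [|y]; first exact: sigma_cochain.
by rewrite -sigma_cobdry /sigma_map dHf dl_iota0.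
Qed.

Lemma tau_eq_of_iota k q (F G : ('I_k -> X q) -> A q) :
  (forall x, iota q (F x) = iota q (G x)) ->
  exists c, forall x : 'I_k -> X (c + q), tau k q c F x = tau k q c G x.
Proof.
move=> E; have [c Ec] := dl_iota_eq_uniform A phi {ffun 'I_k -> X q} q
  (fun w => F w) (fun w => G w) (fun w => E w).
exists c => x; rewrite /tau_iter.
have -> : (fun j => ps q c (x j)) = [ffun j => ps q c (x j)].
  by apply: functional_extensionality => j; rewrite ffunE.
exact: Ec.
Qed.

Lemma cobdry_section k (H : ('I_k -> L) -> D) Q P (w : X P -> X Q) (s : X P -> L) :
  (forall a b, w (opX P a b) = opX Q (w a) (w b)) -> (forall a, pr Q (s a) = w a) ->
  depends_on X psi Q H -> forall x,
  cobdry D (X P) (opX P) k (fun x' => H (fun j => s (x' j))) x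
  = cobdry D L Lop k H (fun j => s (x j)).
Proof.
move=> hw sP dep x; apply: eq_cobdry => i; split=> //; apply: dep => j.
case: ifP => _ //; move: (sP (opX P (x (lift i j)) (x i))) (sP (x (lift i j))) (sP (x i)).
by rewrite /proj_n /= => -> -> ->.
Qed.

Lemma descend k (H : ('I_k -> L) -> D) Q d (s : X (d + Q) -> L) :
  (forall a, pr Q (s a) = ps Q d a) -> depends_on X psi Q H ->
  exists R (f : ('I_k -> X (R + (d + Q))) -> A (R + (d + Q))),
  [/\ forall x, iota _ (f x) = H (fun j => s (ps (d + Q) R (x j))),
      is_cochain D L k H -> is_cochain (An _) (X _) k f &
      forall x, iota _ (cobdry (An _) (X _) (opX _) k f x)
                = cobdry D L Lop k H (fun j => s (ps (d + Q) R (x j)))].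
Proof.
move=> sP dep; have [R [r Hr]] := dl_common_level A phi {ffun 'I_k -> X (d + Q)}
  (fun v => H (fun j => s (v j))) (d + Q).
pose f x := r [ffun j => ps (d + Q) R (x j)].
have fE x : iota _ (f x) = H (fun j => s (ps (d + Q) R (x j))).
  rewrite -(proj1 (Hr _)); congr H; apply: functional_extensionality => j.
  by rewrite ffunE.
exists R, f; split=> // [Hco x [i [j [e E]]]|x].
  by apply: (proj2 (Hr _)); apply: Hco; exists i, j; rewrite !ffunE E.
rewrite (cobdry_alex_morph _ _ _ _ _ _ (dl_iota_alex_morph A phi T phiT _)).
rewrite (functional_extensionality _ _ fE).
have hw a b : ps Q d (ps (d + Q) R (opX _ a b))
             = opX Q (ps Q d (ps (d + Q) R a)) (ps Q d (ps (d + Q) R b)).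
  by rewrite !psis_op.
exact: (cobdry_section k H Q _ _ (fun a => s (ps (d + Q) R a)) hw (fun a => sP _) dep x).
Qed.

Lemma sigma_surj k (g : ('I_k -> L) -> D) :
  is_cont Xt psi D k g -> is_cocycle D L Lop k g ->
  exists n f, is_cocycle (An n) (X n) (opX n) k f /\ forall y, sigma k n f y = g y.
Proof.
move=> cont [gco dg]; have [N dep] := cont_depends_on X psi k D g cont.
have [d [s sP]] := invlim_section X psi N.
have [R [f [fE fco dfE]]] := descend k g N d s sP dep.
have [x|c Ec] := tau_eq_of_iota k.+1 _ (cobdry (An _) (X _) (opX _) k f) (fun _ => 0%R).
  by rewrite dfE dg dl_iota0.
exists (c + (R + (d + N))), (tau k _ c f); split.
  split=> [|x]; first exact: tau_cochain (fco gco).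
  by rewrite -tau_cobdry Ec /tau_iter phis0.
move=> y; rewrite sigma_tau /sigma_map fE; apply: dep => j.
by rewrite sP !pr_psis.
Qed.

Lemma eq_tau k n d (f g : ('I_k -> X n) -> A n) : (forall y, f y = g y) ->
  forall x, tau k n d f x = tau k n d g x.
Proof. by move=> E x; rewrite /tau_iter E. Qed.

Lemma castco_id k p (e : p = p) (f : ('I_k -> X p) -> A p) x :
  castco Xt A k p p e f x = f x.
Proof. by rewrite (eq_irrelevance e erefl). Qed.

Lemma castco_tau k a b d (e : a = b) (e' : (d + a = d + b)) (f : ('I_k -> X a) -> A a) x :
  castco Xt A k _ _ e' (tau k a d f) x = tau k b d (castco Xt A k _ _ e f) x.
Proof. by subst; rewrite castco_id. Qed.

Lemma tau_iterD k n d c (e : (c + d + n = c + (d + n))) (f : ('I_k -> X n) -> A n) x :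
  castco Xt A k _ _ e (tau k n (c + d) f) x = tau k (d + n) c (tau k n d f) x.
Proof.
elim: c e x => [|c IH] e x; first by rewrite castco_id.
have e' : (c + d + n = c + (d + n)) by rewrite addnA.
have -> : tau k (d + n) c.+1 (tau k n d f) x
          = tau k (c + (d + n)) 1 (tau k (d + n) c (tau k n d f)) x by [].
rewrite (eq_tau _ _ 1 _ _ (fun y => esym (IH e' y))).
exact: (castco_tau k _ _ 1 e' e).
Qed.

Definition transported k q (G : ('I_k -> X q) -> A q) p (H : ('I_k -> X p) -> A p) : Prop :=
  exists d (e : (d + q) = p), forall x, H x = castco Xt A k _ _ e (tau k q d G) x.

Lemma transported_tau k q G d : transported k q G (d + q) (tau k q d G).
Proof. by exists d, erefl. Qed.

Lemma transported_trans k q G p H r K :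
  transported k q G p H -> transported k p H r K -> transported k q G r K.
Proof.
move=> [d1 [e1 E1]] [d2 [e2 E2]]; subst p r.
have e : (d2 + d1 + q = d2 + (d1 + q)) by rewrite addnA.
exists (d2 + d1), e => x; rewrite E2 /= tau_iterD.
exact: eq_tau.
Qed.

Lemma transported_tauR k q G p H d :
  transported k q G p H -> transported k q G (d + p) (tau k p d H).
Proof. by move/transported_trans; apply; apply: transported_tau. Qed.

Lemma sigma_transported k q G p H :
  transported k q G p H -> forall y, sigma k p H y = sigma k q G y.
Proof.
move=> [d [e E]] y; subst p; rewrite -(sigma_tau k q d G y) /sigma_map E.
by rewrite castco_id.
Qed.

Lemma iota_tau k n d f x :
  iota (d + n) (tau k n d f x) = iota n (f (fun j => ps n d (x j))).
Proof. exact: dl_iota_phis. Qed.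

Lemma sigma_section k q (G : ('I_k -> X q) -> A q) P (s : X P -> L) (w : X P -> X q) :
  (forall a, pr q (s a) = w a) ->
  forall x, sigma k q G (fun j => s (x j)) = iota q (G (fun j => w (x j))).
Proof.
move=> sP x; rewrite /sigma_map; congr (iota _ (G _)).
by apply: functional_extensionality => j; apply: sP.
Qed.

Lemma transport_sigma_eq k q (G1 G2 : ('I_k -> X q) -> A q) :
  (forall y, sigma k q G1 y = sigma k q G2 y) ->
  exists p H1 H2,
    [/\ transported k q G1 p H1, transported k q G2 p H2 & forall x, H1 x = H2 x].
Proof.
move=> E; have [d [s sP]] := invlim_section X psi q.
have [x|c Ec] := tau_eq_of_iota k _ (tau k q d G1) (tau k q d G2).
  by rewrite !iota_tau -!(sigma_section _ _ _ _ s _ sP) E.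
exists (c + (d + q)), (tau k _ c (tau k q d G1)), (tau k _ c (tau k q d G2)).
by split=> //; apply/transported_tauR/transported_tau.
Qed.

Lemma transport_sigma_cobdry m q (G1 G2 : ('I_m.+1 -> X q) -> A q)
    (h : ('I_m -> L) -> D) :
  is_cont Xt psi D m h -> is_cochain D L m h ->
  (forall y, sigma m.+1 q G1 y = aadd D (sigma m.+1 q G2 y) (cobdry D L Lop m h y)) ->
  exists p H1 H2 h', [/\ transported m.+1 q G1 p H1, transported m.+1 q G2 p H2,
    is_cochain (An p) (X p) m h' &
    forall x, H1 x = (H2 x + cobdry (An p) (X p) (opX p) m h' x)%R].
Proof.
move=> cont hco E; have [N dep] := cont_depends_on X psi m D h cont.
have [d [s sP]] := invlim_section X psi (N + q).
have [R [h' [_ h'co dh'E]]] :=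
  descend m h (N + q) d s sP (depends_on_leq X psi _ _ _ _ _ (leq_addr q N) dep).
pose up G := tau m.+1 _ R (tau m.+1 _ d (tau m.+1 q N G)).
have sPq a : pr q (s (ps _ R a)) = ps q N (ps (N + q) d (ps _ R a)).
  by rewrite -(pr_psis X psi _ q N) sP.
have upE G x : iota _ (up G x) = sigma m.+1 q G (fun j => s (ps _ R (x j))).
  by rewrite !iota_tau (sigma_section _ _ _ _ _ _ sPq).
have [x|c Ec] := tau_eq_of_iota m.+1 _ (up G1)
  (fun x => (up G2 x + cobdry (An _) (X _) (opX _) m h' x)%R).
  by rewrite -dl_addE upE E upE dh'E.
exists _, (tau m.+1 _ c (up G1)), (tau m.+1 _ c (up G2)), (tau m _ c h'); split.
- by do 3![apply: transported_tauR]; apply: transported_tau.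
- by do 3![apply: transported_tauR]; apply: transported_tau.
- exact: tau_cochain (h'co hco).
by move=> x; rewrite Ec /tau_iter phisD; congr (_ + _)%R; exact: tau_cobdry.
Qed.

Lemma sigma_cohom_eq m n (f g : ('I_m.+1 -> X n) -> A n) :
  cohom_eq (An n) (X n) (opX n) m (fun _ => True) f g ->
  cohom_eq D L Lop m (is_cont Xt psi D m) (sigma m.+1 n f) (sigma m.+1 n g).
Proof.
case=> [E|[m_gt0 [h [_ hco E]]]]; first by left=> y; rewrite /sigma_map E.
right; split=> //; exists (sigma m n h); split=> [||y]; first exact: sigma_cont.
  exact: sigma_cochain.
by rewrite -sigma_cobdry /sigma_map E /= dl_addE.
Qed.

Lemma sigma_inj_level m q (G1 G2 : ('I_m.+1 -> X q) -> A q) :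
  cohom_eq D L Lop m (is_cont Xt psi D m) (sigma m.+1 q G1) (sigma m.+1 q G2) ->
  exists p H1 H2, [/\ transported m.+1 q G1 p H1, transported m.+1 q G2 p H2 &
    cohom_eq (An p) (X p) (opX p) m (fun _ => True) H1 H2].
Proof.
case=> [E|[m_gt0 [h [cont hco E]]]].
  have [p [H1 [H2 [T1 T2 EH]]]] := transport_sigma_eq _ _ _ _ E.
  by exists p, H1, H2; split=> //; left.
have [p [H1 [H2 [h' [T1 T2 h'co EH]]]]] := transport_sigma_cobdry _ _ _ _ _ cont hco E.
by exists p, H1, H2; split=> //; right; split=> //; exists h'.
Qed.

Lemma sigma_inj m n1 n2 f1 f2 :
  cohom_eq D L Lop m (is_cont Xt psi D m) (sigma m.+1 n1 f1) (sigma m.+1 n2 f2) ->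
  exists p H1 H2, [/\ transported m.+1 n1 f1 p H1, transported m.+1 n2 f2 p H2 &
    cohom_eq (An p) (X p) (opX p) m (fun _ => True) H1 H2].
Proof.
move=> E; have T1 := transported_tau m.+1 n1 f1 n2.
have T2 : transported m.+1 n2 f2 (n2 + n1)
    (castco Xt A m.+1 _ _ (addnC n1 n2) (tau m.+1 n2 n1 f2)).
  by exists n1, (addnC n1 n2).
have [p [H1 [H2 [T1' T2' EH]]]] := sigma_inj_level m _ _ _
  (eq_cohom_eq D L Lop m (is_cont Xt psi D m) _ _ _ _
     (fun y => esym (sigma_transported _ _ _ _ _ T1 y))
     (fun y => esym (sigma_transported _ _ _ _ _ T2 y)) E).
by exists p, H1, H2; split=> //; apply: transported_trans; eassumption.
Qed.
End QuandleCochains.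
(* k = m.+1 ranges over all k >= 1, and the systems are indexed from 0. *)
Theorem mainTheorem10
  (X : nat -> finType) (opX : forall n, X n -> X n -> X n)
  (Xq : forall n, is_quandle (X n) (opX n))
  (Xne : forall n, (0 < #|X n|)%N)
  (psi : forall n, X n.+1 -> X n)
  (hpsi : forall n a b, psi n (opX n.+1 a b) = opX n (psi n a) (psi n b))
  (A : nat -> zmodType) (T : forall n, {additive A n -> A n})
  (Tbij : forall n, bijective (T n))
  (phi : forall n, {additive A n -> A n.+1})
  (phiT : forall n a, phi n (T n a) = T n.+1 (phi n a))
  (m : nat) :
  let Xt := fun n => (X n : Type) in
  let ph := fun n => (phi n : A n -> A n.+1) in
  let Tf := fun n => (T n : A n -> A n) in
  let L := invlim Xt psi in
  let Lop := invlim_op Xt psi opX hpsi in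
  let D := dl_alex A ph Tf in
  let An := fun n => zmodAlex (A n) (Tf n) in
  let cocyc n (f : ('I_m.+1 -> X n) -> A n) :=
    is_cocycle (An n) (X n) (opX n) m.+1 f in
  let coheq n (f g : ('I_m.+1 -> X n) -> A n) :=
    cohom_eq (An n) (X n) (opX n) m (fun _ => True) f g in
  let ccocyc (g : ('I_m.+1 -> L) -> D) :=
    is_cont Xt psi D m.+1 g /\ is_cocycle D L Lop m.+1 g in
  let ccoheq (g g' : ('I_m.+1 -> L) -> D) :=
    cohom_eq D L Lop m (is_cont Xt psi D m) g g' in
  let sigma n f := sigma_map Xt psi A ph m.+1 n f in
  let tau n d f := tau_iter Xt psi A ph m.+1 n d f in
  [/\ (* sigma_n is well defined on cohomology classes *)
      (forall n f, cocyc n f -> ccocyc (sigma n f)),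
      (forall n f g, cocyc n f -> cocyc n g -> coheq n f g ->
                     ccoheq (sigma n f) (sigma n g)),
      (* compatibility sigma_{n+1} o tau_n = sigma_n *)
      (forall n f, cocyc n f -> ccoheq (sigma n.+1 (tau n 1 f)) (sigma n f)),
      (* additivity *)
      (forall n f g x, sigma n (fun y => f y + g y)%R x
                       = dl_add A ph (sigma n f x) (sigma n g x)) &
      (* Psi is bijective: surjective ... *)
      (forall g, ccocyc g -> exists n f, cocyc n f /\ ccoheq (sigma n f) g) /\
      (* ... and injective *)
      (forall n1 n2 f1 f2, cocyc n1 f1 -> cocyc n2 f2 ->
         ccoheq (sigma n1 f1) (sigma n2 f2) ->
         exists p d1 d2 (e1 : (d1 + n1)%N = p) (e2 : (d2 + n2)%N = p),
           coheq p (castco Xt A m.+1 _ _ e1 (tau n1 d1 f1))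
                   (castco Xt A m.+1 _ _ e2 (tau n2 d2 f2)))].
Proof.
move=> Xt ph Tf L Lop D An cocyc coheq ccocyc ccoheq sigma tau; cbv zeta.
split.
- by move=> n f; apply: sigma_cocycle.
- by move=> n f g _ _; apply: sigma_cohom_eq.
- by move=> n f _; left=> y; apply: (sigma_tau X psi A phi m.+1 n 1).
- by move=> n f g y; rewrite /sigma_map dl_addE.
split=> [g [cont gco]|n1 n2 f1 f2 _ _ E].
  have [n [f [cf E]]] := sigma_surj X opX psi hpsi A T phi phiT m.+1 g cont gco.
  by exists n, f; split=> //; left.
have [p [H1 [H2 [[d1 [e1 E1]] [d2 [e2 E2]] EH]]]] :=
  sigma_inj X opX psi hpsi A T phi phiT m n1 n2 f1 f2 E.
by exists p, d1, d2, e1, e2; apply: eq_cohom_eq EH.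
Qed.
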